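(* Let $f:X\to X$ be a piecewise contracting map on a compact, locally connected metric space $(X,d)$ with continuity pieces $X_1,\dots,X_N$, discontinuity set $\Delta$ and attractor $\Lambda$. If $\Delta=\emptyset$ or $d(\Lambda,\Delta)\neq0$, then there exists $n_0\ge1$ such that for every atom $A$ of generation $n\ge n_0$ there is $i\in\{1,\dots,N\}$ with $A\subset X_i$.
   Context: A map $f:X\to X$ on a compact, locally connected metric space $(X,d)$ is piecewise contracting if there are $N\ge2$ non-empty, pairwise disjoint open sets $X_1,\dots,X_N$ with $X=\bigcup_i\overline{X_i}$, a constant $\lambda\in(0,1)$ with $d(f(x),f(y))\le\lambda d(x,y)$ for all $x,y$ in the same $X_i$, and such that $\tilde X:=\bigcap_{n\ge0}f^{-n}(X\setminus\Delta)\neq\emptyset$, where $\Delta:=X\setminus\bigcup_iX_i$ ($f$ is arbitrary on $\Delta$). For $A\subset X$ let $F_i(A):=\overline{f(A\cap X_i)}$; an atom of generation $n\ge1$ is a set $F_{i_n}\circ\cdots\circ F_{i_1}(X)$ with $i_1,\dots,i_n\in\{1,\dots,N\}$; $\Lambda_n$ is the union of all atoms of generation $n$ and the attractor is $\Lambda:=\bigcap_{n\ge1}\Lambda_n$. Here $d(\Lambda,\Delta)=\inf\{d(x,y):x\in\Lambda,y\in\Delta\}$. *)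

From HB Require Import structures.
From mathcomp Require Import all_boot all_order all_algebra.
From mathcomp Require Import all_classical all_reals all_analysis.
Set Implicit Arguments.
Unset Strict Implicit.
Unset Printing Implicit Defensive.
Import Order.TTheory GRing.Theory Num.Theory.
Local Open Scope classical_set_scope.
Local Open Scope ring_scope.

Section PC.
Context {R : realType} {X : metricType R}.

Definition locally_connected_space : Prop :=
  forall (x : X) (U : set X), nbhs x U ->
    exists V : set X, [/\ open V, V x, connected V & V `<=` U].

Definition disc_set (N : nat) (Xs : 'I_N -> set X) : set X :=
  ~` (\bigcup_(i in [set: 'I_N]) Xs i).

Definition Xtilde (f : X -> X) (N : nat) (Xs : 'I_N -> set X) : set X :=
  [set x | forall n : nat, ~ disc_set Xs (iter n f x)].

Definition Fmap (f : X -> X) (N : nat) (Xs : 'I_N -> set X) (i : 'I_N)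
    (A : set X) : set X :=
  closure (f @` (A `&` Xs i)).

(* For w = [:: i_1; ...; i_n], atom_of w = F_{i_n} o ... o F_{i_1} (X). *)
Definition atom_of (f : X -> X) (N : nat) (Xs : 'I_N -> set X)
    (w : seq 'I_N) : set X :=
  foldl (fun A i => Fmap f Xs i A) [set: X] w.

Definition is_atom (f : X -> X) (N : nat) (Xs : 'I_N -> set X) (n : nat)
    (A : set X) : Prop :=
  (1 <= n)%N /\ exists w : seq 'I_N, size w = n /\ A = atom_of f Xs w.

Definition Lambda_n (f : X -> X) (N : nat) (Xs : 'I_N -> set X) (n : nat)
    : set X :=
  [set x | exists A, is_atom f Xs n A /\ A x].

Definition attractor (f : X -> X) (N : nat) (Xs : 'I_N -> set X) : set X :=
  [set x | forall n : nat, (1 <= n)%N -> Lambda_n f Xs n x].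

(* d(A, B) = inf {d(x,y) : x in A, y in B}, in the extended reals (inf of the empty set is +oo). *)
Definition set_dist (A B : set X) : \bar R :=
  ereal_inf [set EFin (mdist x y) | x in A & y in B].

Definition piecewise_contracting (f : X -> X) (N : nat) (Xs : 'I_N -> set X)
    : Prop :=
  [/\ (2 <= N)%N,
      (forall i, Xs i !=set0),
      (forall i, open (Xs i)),
      (forall i j, i != j -> Xs i `&` Xs j = set0)
    & [set: X] = \bigcup_(i in [set: 'I_N]) closure (Xs i)] /\
  (exists lambda : R, 0 < lambda < 1 /\
     forall i x y, Xs i x -> Xs i y ->
       mdist (f x) (f y) <= lambda * mdist x y) /\
  Xtilde f Xs !=set0.

End PC.

From HB Require Import structures.
From mathcomp Require Import all_boot all_order all_algebra.
From mathcomp Require Import all_classical all_reals all_analysis.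
From mathcomp Require Import lra.
Import Order.TTheory GRing.Theory Num.Theory.
Import numFieldNormedType.Exports.
Local Open Scope classical_set_scope.
Local Open Scope ring_scope.

(* Atoms of generation n have diameter at most lam^n diam X, and by compactness
   every atom of large generation lies within e/3 of the attractor, where e > 0
   is the distance from the attractor to Delta.  Compactness and local
   connectedness give a radius rho such that every ball of radius rho lies in a
   connected set of diameter < 2e/3.  Near the attractor such a set misses
   Delta, so, being connected and covered by the disjoint open pieces, it lies
   in a single X_i; an atom of diameter < rho is contained in such a ball. *)

Section MetricSpace.
Context {R : realType} {X : metricType R}.
Implicit Types (x y z : X) (V : set X).

Lemma ball_mdistP x (e : R) y : ball x e y <-> mdist x y < e.
Proof. by rewrite ballEmdist. Qed.

Lemma compact_eventually {P : nat -> X -> Prop} : compact [set: X] ->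
  (forall x, \forall y \near x & n \near \oo, P n y) ->
  exists n0, forall n, (n0 <= n)%N -> forall y, P n y.
Proof.
move=> /compact_near_coveringP cX Pnear.
have [n0 _ Pn0] := cX nat \oo P _ (fun x _ => Pnear x).
by exists n0 => n n0n y; exact: Pn0.
Qed.

Lemma compact_mdist_bounded : compact [set: X] ->
  exists D, forall y z, mdist y z <= D.
Proof.
move=> cX; have [[x0 _]|X0] := pselect (exists x0 : X, True); last first.
  by exists 0 => y; exfalso; apply: X0; exists y.
have near_bound x : \forall y \near x & n \near \oo, mdist x0 y <= n%:R.
  exists (ball x 1, [set n | (Num.Def.archi_bound (mdist x0 x + 1) <= n)%N]).
    by split; [exact: nbhsx_ballx | exact: nbhs_infty_ge].
  case=> y n /= [/ball_mdistP xy xn].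
  have := archi_boundP (addr_ge0 (mdist_ge0 x0 x) ler01).
  have := metric_triangle x0 x y.
  rewrite -(ler_nat R) in xn; lra.
have [n Hn] := compact_eventually cX near_bound.
exists (n%:R + n%:R) => y z; apply: le_trans (metric_triangle y x0 z) _.
by rewrite metric_sym; apply: lerD; exact: Hn.
Qed.

Lemma closure_mdist_le (S : set X) (c : R) :
  (forall y z, S y -> S z -> mdist y z <= c) ->
  forall y z, closure S y -> closure S z -> mdist y z <= c.
Proof.
move=> Sc y z cy cz; apply/ler_addgt0Pr => e e0.
have e2 : 0 < e / 2 by rewrite divr_gt0.
have [s [Ss /ball_mdistP ys]] := cy _ (nbhsx_ballx y _ e2).
have [t [St /ball_mdistP zt]] := cz _ (nbhsx_ballx z _ e2).
have := Sc _ _ Ss St; have := metric_triangle y s z.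
have := metric_triangle s t z; rewrite (metric_sym t z); lra.
Qed.

(* A Lebesgue-number argument: one radius 1/(m+1) works for every point. *)
Lemma uniformly_locally_connected {r : R} :
  compact [set: X] -> locally_connected_space (X := X) -> 0 < r ->
  exists m : nat, forall y, exists V c,
    [/\ connected V, V `<=` ball c r & ball y m.+1%:R^-1 `<=` V].
Proof.
move=> cX lc r0.
pose P (n : nat) y := exists V c,
  [/\ connected V, V `<=` ball c r & ball y n.+1%:R^-1 `<=` V].
suff [m Hm] : exists m, forall n, (m <= n)%N -> forall y, P n y.
  by exists m; exact: Hm.
apply: compact_eventually => // x.
have [V [oV Vx cV Vr]] := lc x (ball x r) (nbhsx_ballx x r r0).
have /nbhs_ballP [e /= e0 eV] : nbhs x V by exact: open_nbhs_nbhs.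
have e2 : 0 < e / 2 by rewrite divr_gt0.
have [m me] := ltr_add_invr e2; rewrite add0r in me.
exists (ball x m.+1%:R^-1, [set n | (m <= n)%N]).
  by split; [apply: nbhsx_ballx; rewrite invr_gt0 ltr0n | exact: nbhs_infty_ge].
case=> y n /= [/ball_mdistP xy mn]; exists V, x; split => // z /ball_mdistP yz.
apply/eV/ball_mdistP.
have nm : n.+1%:R^-1 <= m.+1%:R^-1 :> R.
  by rewrite lef_pV2 ?posrE ?ltr0n // ler_nat.
set a := m.+1%:R^-1 in xy me nm *; set b := n.+1%:R^-1 in yz nm *.
have := metric_triangle x y z; lra.
Qed.

Lemma set_dist_gap (A B : set X) : set_dist A B != 0%E ->
  exists2 e : R, 0 < e & forall a b, A a -> B b -> e <= mdist a b.
Proof.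
have dist_lb a b : A a -> B b -> (set_dist A B <= (mdist a b)%:E)%E.
  by move=> Aa Bb; apply: ereal_inf_lbound; exists a => //; exists b.
have dist_ge0 : (0 <= set_dist A B)%E.
  by apply/ereal_infP => _ [a _ [b _ <-]]; rewrite lee_fin mdist_ge0.
move: dist_lb dist_ge0; case: (set_dist A B) => [e| |] // dist_lb e_ge0 e_neq0.
- exists e; first by rewrite lt_neqAle eq_sym -lee_fin e_ge0 andbT.
  by move=> a b Aa Bb; rewrite -lee_fin; exact: dist_lb.
- by exists 1 => // a b Aa Bb; have := dist_lb a b Aa Bb.
Qed.

End MetricSpace.

Section Pieces.
Context {R : realType} {X : metricType R} {N : nat} (Xs : 'I_N -> set X).
Hypothesis Xs_open : forall i, open (Xs i).
Hypothesis Xs_disjoint : forall i j, i != j -> Xs i `&` Xs j = set0.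

Lemma not_disc_set_piece {x : X} : ~ disc_set Xs x -> exists i, Xs i x.
Proof. by move=> /contrapT[i _ Xix]; exists i. Qed.

Lemma connected_sub_piece (V : set X) (a : X) (i : 'I_N) :
  connected V -> (forall v, V v -> ~ disc_set Xs v) -> V a -> Xs i a ->
  V `<=` Xs i.
Proof.
move=> cV VnD Va Xia.
have Xs_other_closed : closed (~` \bigcup_(j in [set j | j != i]) Xs j).
  by apply: open_closedC; apply: bigcup_open => j _; exact: Xs_open.
have -> : V = V `&` Xs i; last by move=> v [].
apply/esym/cV; [by exists a | by exists (Xs i) |].
exists (~` \bigcup_(j in [set j | j != i]) Xs j) => //.
apply/seteqP; split => v [Vv Xv]; split => //.
  by move=> [j /= ji Xjv]; have : (Xs j `&` Xs i) v by []; rewrite Xs_disjoint.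
have [j Xjv] := not_disc_set_piece (VnD v Vv).
by case: (eqVneq j i) => [<- //|ji]; exfalso; apply: Xv; exists j.
Qed.

Lemma ball_sub_piece_near {L : set X} {e : R} {m : nat} {l a : X} :
  (forall l z, L l -> disc_set Xs z -> e <= mdist l z) ->
  (forall y : X, exists V c,
    [/\ connected V, V `<=` ball c (e / 3) & ball y m.+1%:R^-1 `<=` V]) ->
  L l -> mdist l a < e / 3 -> exists i, ball a m.+1%:R^-1 `<=` Xs i.
Proof.
move=> gap ulc Ll la; have [V [c [cV Vc aV]]] := ulc a.
have Va : V a by apply: aV; exact: ballxx.
have VnD v : V v -> ~ disc_set Xs v.
  (* [v] is within [e / 3 + 2 * (e / 3) < e] of [l]. *)
  move=> Vv Dv; have := gap l v Ll Dv.
  have := metric_triangle l a v; have := metric_triangle a c v.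
  move/ball_mdistP: (Vc _ Vv); move/ball_mdistP: (Vc _ Va).
  rewrite (metric_sym c a); lra.
have [i Xia] := not_disc_set_piece (VnD a Va).
exists i; apply: subset_trans aV _; exact: connected_sub_piece Xia.
Qed.

End Pieces.

Lemma expr_mul_eventually_lt {R : realType} {lam d : R} (D : R) :
  0 <= lam -> lam < 1 -> 0 < d ->
  exists k, forall n, (k <= n)%N -> lam ^+ n * D < d.
Proof.
move=> l0 l1 d0; pose D1 := `|D| + 1.
have D1_gt0 : 0 < D1 by rewrite ltr_wpDl.
have dD : 0 < d / D1 by rewrite divr_gt0.
have [|k _ Hk] := @cvg_expr R lam _ (ball 0 (d / D1)) (nbhsx_ballx _ _ dD).
  by rewrite ger0_norm.
exists k => n kn; have := Hk n kn; rewrite /= /ball /= sub0r normrN.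
rewrite ger0_norm ?exprn_ge0 // ltr_pdivlMr // => lamn.
apply: le_lt_trans lamn; apply: le_trans (ler_norm _) _.
rewrite normrM ger0_norm ?exprn_ge0 //; apply: ler_wpM2l; first exact: exprn_ge0.
by rewrite lerDl.
Qed.

Section Atoms.
Context {R : realType} {X : metricType R} (f : X -> X) {N : nat}
  (Xs : 'I_N -> set X).
Local Notation atom := (atom_of f Xs).
Local Notation F := (Fmap f Xs).

Lemma atom_of_rcons w i : atom (rcons w i) = F i (atom w).
Proof. by rewrite /atom_of foldl_rcons. Qed.

Lemma closed_atom_of w : closed (atom w).
Proof.
case/lastP: w => [|w i]; first exact: closedT.
by rewrite atom_of_rcons; exact: closed_closure.
Qed.

Lemma FmapS i A B : A `<=` B -> F i A `<=` F i B.
Proof. by move=> AB; apply: closureS; apply: image_subset; exact: setSI. Qed.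

Lemma foldl_FmapS w A B : A `<=` B ->
  foldl (fun A i => F i A) A w `<=` foldl (fun A i => F i A) B w.
Proof. by elim: w A B => [//|i w IH] A B AB /=; apply: IH; exact: FmapS. Qed.

Lemma atom_of_cat_sub u v : atom (u ++ v) `<=` atom v.
Proof. by rewrite /atom_of foldl_cat; exact: foldl_FmapS. Qed.

Lemma Lambda_n_antitone m n : (1 <= m)%N -> (m <= n)%N ->
  Lambda_n f Xs n `<=` Lambda_n f Xs m.
Proof.
move=> m1 mn x [_ [[_ [w [sw ->]]] Ax]].
rewrite -(cat_take_drop (n - m) w) in Ax.
exists (atom (drop (n - m) w)); split; last exact: atom_of_cat_sub Ax.
by split=> //; exists (drop (n - m) w); rewrite size_drop sw subKn.
Qed.

Lemma Lambda_nE n : (1 <= n)%N ->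
  Lambda_n f Xs n = \bigcup_(t in [set: n.-tuple 'I_N]) atom t.
Proof.
move=> n1; apply/seteqP; split => x.
  move=> [_ [[_ [w [sw ->]]] Ax]].
  have sw' : size w == n by rewrite sw.
  by exists (Tuple sw').
move=> [t _ Ax]; exists (atom t); split => //; split => //.
by exists t; rewrite size_tuple.
Qed.

Lemma closed_Lambda_n n : closed (Lambda_n f Xs n).
Proof.
case: n => [|n]; last first.
  rewrite Lambda_nE //; apply: closed_bigcup => [|t _]; first exact: finite_finset.
  exact: closed_atom_of.
have -> : Lambda_n f Xs 0 = set0 by apply/seteqP; split => x // -[A [[]]].
exact: closed0.
Qed.

Lemma atom_mdist_le {lam D : R} :
  0 <= lam ->
  (forall i x y, Xs i x -> Xs i y -> mdist (f x) (f y) <= lam * mdist x y) ->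
  (forall y z : X, mdist y z <= D) ->
  forall w y z, atom w y -> atom w z -> mdist y z <= lam ^+ size w * D.
Proof.
move=> lam0 f_contr D_diam; elim/last_ind => [|w i IH] y z.
  by rewrite expr0 mul1r.
rewrite !atom_of_rcons size_rcons; apply: closure_mdist_le.
move=> _ _ [y' [Ay' Xy'] <-] [z' [Az' Xz'] <-].
apply: le_trans (f_contr _ _ _ Xy' Xz') _.
by rewrite exprS -mulrA; apply: ler_wpM2l => //; exact: IH.
Qed.

Lemma atom_mdist_eventually_lt {lam d : R} :
  compact [set: X] -> 0 <= lam -> lam < 1 -> 0 < d ->
  (forall i x y, Xs i x -> Xs i y -> mdist (f x) (f y) <= lam * mdist x y) ->
  exists k, forall w y z, (k <= size w)%N -> atom w y -> atom w z ->
    mdist y z < d.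
Proof.
move=> cX lam0 lam1 d0 f_contr.
have [D D_diam] := compact_mdist_bounded cX.
have [k Hk] := expr_mul_eventually_lt D lam0 lam1 d0.
exists k => w y z kw Ay Az.
by apply: le_lt_trans (atom_mdist_le lam0 f_contr D_diam _ _ _ Ay Az) _; exact: Hk.
Qed.

Lemma Lambda_n_near_attractor {r : R} : compact [set: X] -> 0 < r ->
  exists n1, forall n, (n1 <= n)%N -> forall x, Lambda_n f Xs n x ->
    exists2 l, attractor f Xs l & mdist l x < r.
Proof.
move=> cX r0; apply: compact_eventually => // x.
have [Ax|nAx] := pselect (attractor f Xs x).
  exists (ball x r, setT); first by split; [exact: nbhsx_ballx | exact: filterT].
  by case=> y n /= [/ball_mdistP xy _] _; exists x.
have [m /not_implyP [m1 nLm]] := (existsNP _).2 nAx.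
exists (~` Lambda_n f Xs m, [set n | (m <= n)%N]).
  split; last exact: nbhs_infty_ge.
  by apply: open_nbhs_nbhs; split => //; apply: closed_openC; exact: closed_Lambda_n.
by case=> y n /= [nLy mn] Ly; exfalso; apply: nLy; exact: Lambda_n_antitone Ly.
Qed.

End Atoms.

Theorem lemma1 (R : realType) (X : metricType R)
  (f : X -> X) (N : nat) (Xs : 'I_N -> set X) :
  compact [set: X] ->
  locally_connected_space (X := X) ->
  piecewise_contracting f Xs ->
  (disc_set Xs = set0 \/ set_dist (attractor f Xs) (disc_set Xs) != 0%E) ->
  exists n0 : nat, (1 <= n0)%N /\
    forall (n : nat) (A : set X), (n0 <= n)%N -> is_atom f Xs n A ->
      exists i : 'I_N, A `<=` Xs i.
Proof.
move=> cX lc [[N2 _ Xs_open Xs_disj _] [[lam [/andP[/ltW lam0 lam1] f_contr]] _]] hD.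
have [e e0 gap] : exists2 e : R, 0 < e & forall l z,
    attractor f Xs l -> disc_set Xs z -> e <= mdist l z.
  by case: hD => [-> | /set_dist_gap //]; exists 1.
have r0 : 0 < e / 3 by rewrite divr_gt0.
have [m ulc] := uniformly_locally_connected cX lc r0.
have [n1 near_attr] := Lambda_n_near_attractor f Xs cX r0.
have m_gt0 : 0 < m.+1%:R^-1 :> R by rewrite invr_gt0 ltr0n.
have [k small] := atom_mdist_eventually_lt f Xs cX lam0 lam1 m_gt0 f_contr.
exists (maxn 1 (maxn n1 k)); split; first by rewrite leq_maxl.
move=> n A n0n [n_gt0 [w [sw ->]]].
have [n1n kn] : (n1 <= n)%N /\ (k <= n)%N by move: n0n; rewrite !geq_max => /and3P[].
have [[a Aa]|A0] := pselect (atom_of f Xs w !=set0); last first.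
  by exists (Ordinal (ltnW N2)) => y Ay; exfalso; apply: A0; exists y.
have La : Lambda_n f Xs n a.
  by exists (atom_of f Xs w); split => //; split => //; exists w.
have [l Al la] := near_attr n n1n a La.
have [i ai] := ball_sub_piece_near Xs Xs_open Xs_disj gap ulc Al la.
by exists i => y Ay; apply/ai/ball_mdistP/(small w); rewrite ?sw.
Qed.
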